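(* Let $\Phi=P.\phi$ be a DQBF with prefix $P=\forall x_1,\dots,x_n\,\exists y_1(D_1),\dots,y_k(D_k)$. If $G_{\mathrm{syn}}$ is a syntactic symmetry group for $\Phi$, then the associated group $G_{\mathrm{sem}}$ of $G_{\mathrm{syn}}$ is a semantic symmetry group for $\Phi$ (in particular, it is a group under composition).
   Context: $X=\{x_1,\dots,x_n\}$, $Y=\{y_1,\dots,y_k\}$ are finite disjoint sets of propositional variables; $\operatorname{BF}(V)$ the propositional formulas over $V\subseteq X\cup Y$; $\mathcal A(V)$ the assignments $V\to\{\top,\bot\}$; $[\phi]_\sigma$ the truth value; $\phi\in\operatorname{BF}(X\cup Y)$; $D_j\subseteq X$. An interpretation is $s=(s_1,\dots,s_k)$ with $s_j:\{\top,\bot\}^{|D_j|}\to\{\top,\bot\}$; $\mathcal S(P)$ the set of interpretations. For $\sigma\in\mathcal A(X)$, $\sigma_s\in\mathcal A(X\cup Y)$ equals $\sigma$ on $X$ and $\sigma_s(y_j)=s_j$ evaluated at $\sigma$'s values on $D_j$. $[P.\phi]_s=\bigwedge_{\sigma\in\mathcal A(X)}[\phi]_{\sigma_s}$. For $g:\operatorname{BF}(V)\to\operatorname{BF}(V)$ and $\rho\in\mathcal A(V)$, $g(\rho)(v)=[g(v)]_\rho$; $g$ preserves propositional satisfiability if $[g(\phi)]_\rho=[\phi]_{g(\rho)}$ always. A formula in $\operatorname{BF}(Y)$ depends on $x_i$ if it contains some $y_j$ with $x_i\in D_j$. A bijection $g$ of $\operatorname{BF}(X\cup Y)$ is admissible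 w.r.t. $P$ if it preserves propositional satisfiability, $g(x_i)\in\operatorname{BF}(X)$, $g(y_j)\in\operatorname{BF}(Y)$, and if $g(y_j)$ depends on $x_i$ then $g^{-1}(x_i)\in\operatorname{BF}(D_j)$. An admissible group is a subgroup of all admissible functions. For admissible $g$ and $\sigma\in\mathcal A(X)$, $g(\sigma)(x)=[g(x)]_\sigma$. A syntactic symmetry group for $P.\phi$ is an admissible group $G$ with $[P.\phi]_s=[P.g(\phi)]_s$ for all $g\in G$, $s\in\mathcal S(P)$. The associated group of $G_{\mathrm{syn}}$ is the set of all bijections $f:\mathcal S(P)\to\mathcal S(P)$ such that for every $s\in\mathcal S(P)$ and $\sigma\in\mathcal A(X)$ there exists $g\in G_{\mathrm{syn}}$ with $g(\sigma)_{f(s)}=g(\sigma_s)$. A semantic symmetry group for $P.\phi$ is a group $G$ of bijections of $\mathcal S(P)$ with $[P.\phi]_s=[P.\phi]_{f(s)}$ for all $f\in G$, $s\in\mathcal S(P)$. *)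

From mathcomp Require Import all_boot.
Set Implicit Arguments. Unset Strict Implicit. Unset Printing Implicit Defensive.

Inductive form (V : Type) : Type :=
| FTop | FBot | FVar of V | FNot of form V
| FAnd of form V & form V | FOr of form V & form V
| FImp of form V & form V | FIff of form V & form V.
Arguments FTop {V}. Arguments FBot {V}.

Fixpoint eval (V : Type) (r : V -> bool) (f : form V) : bool :=
  match f with
  | FTop => true | FBot => false | FVar v => r v
  | FNot a => ~~ eval r a
  | FAnd a b => eval r a && eval r b
  | FOr a b => eval r a || eval r b
  | FImp a b => eval r a ==> eval r b
  | FIff a b => eval r a == eval r b
  end.

(* [over P f]: all variables of f satisfy P, i.e. f is in BF({v | P v}). *)
Fixpoint over (V : Type) (P : pred V) (f : form V) : bool :=
  match f with
  | FTop | FBot => true | FVar v => P v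
  | FNot a => over P a
  | FAnd a b | FOr a b | FImp a b | FIff a b => over P a && over P b
  end.

Fixpoint has_var (V : Type) (P : pred V) (f : form V) : bool :=
  match f with
  | FTop | FBot => false | FVar v => P v
  | FNot a => has_var P a
  | FAnd a b | FOr a b | FImp a b | FIff a b => has_var P a || has_var P b
  end.

(* Variables X = {x_0..x_{n-1}} (inl) and Y = {y_0..y_{k-1}} (inr). *)
Definition var (n k : nat) := ('I_n + 'I_k)%type.

Definition isX n k : pred (var n k) := fun v => if v is inl _ then true else false.
Definition isY n k : pred (var n k) := fun v => if v is inr _ then true else false.
Definition inD n k (D : 'I_k -> {set 'I_n}) (j : 'I_k) : pred (var n k) :=
  fun v => if v is inl i then i \in D j else false.

Definition dom n (Dj : {set 'I_n}) := {ffun {x : 'I_n | x \in Dj} -> bool}.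

Definition interp n k (D : 'I_k -> {set 'I_n}) :=
  forall j : 'I_k, {ffun dom (D j) -> bool}.

Definition restrict n (sigma : 'I_n -> bool) (Dj : {set 'I_n}) : dom Dj :=
  [ffun x => sigma (val x)].

Definition ext n k (D : 'I_k -> {set 'I_n}) (sigma : 'I_n -> bool) (s : interp D)
  : var n k -> bool :=
  fun v => match v with inl i => sigma i | inr j => s j (restrict sigma (D j)) end.

Definition qsat n k (D : 'I_k -> {set 'I_n}) (phi : form (var n k)) (s : interp D) : bool :=
  [forall sigma : {ffun 'I_n -> bool}, eval (ext sigma s) phi].

Definition act V (g : form V -> form V) (rho : V -> bool) : V -> bool :=
  fun v => eval rho (g (FVar v)).

Definition preserves_sat V (g : form V -> form V) : Prop :=
  forall (phi : form V) (rho : V -> bool), eval rho (g phi) = eval (act g rho) phi.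

Definition depends n k (D : 'I_k -> {set 'I_n}) (psi : form (var n k)) (i : 'I_n) : bool :=
  has_var (fun v : var n k => if v is inr l then i \in D l else false) psi.

Definition admissible n k (D : 'I_k -> {set 'I_n}) (g : form (var n k) -> form (var n k))
  : Prop :=
  [/\ bijective g,
      preserves_sat g,
      (forall i : 'I_n, over (@isX n k) (g (FVar (inl i)))),
      (forall j : 'I_k, over (@isY n k) (g (FVar (inr j)))) &
      (forall (j : 'I_k) (i : 'I_n), depends D (g (FVar (inr j))) i ->
         forall phi, g phi = FVar (inl i) -> over (inD D j) phi)].

Definition is_group T (G : (T -> T) -> Prop) : Prop :=
  [/\ G (fun x => x),
      (forall f h, G f -> G h -> G (fun x => f (h x))) &
      (forall f, G f -> exists h, [/\ G h, cancel f h & cancel h f])].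

Definition admissible_group n k (D : 'I_k -> {set 'I_n})
  (G : (form (var n k) -> form (var n k)) -> Prop) : Prop :=
  is_group G /\ (forall g, G g -> admissible D g).

Definition syntactic_symmetry_group n k (D : 'I_k -> {set 'I_n}) (phi : form (var n k))
  (G : (form (var n k) -> form (var n k)) -> Prop) : Prop :=
  admissible_group D G /\
  (forall g (s : interp D), G g -> qsat phi s = qsat (g phi) s).

(* g(sigma)(x) = [g(x)]_sigma, for sigma in A(X) (g(x) is in BF(X)). *)
Definition actX n k (g : form (var n k) -> form (var n k)) (sigma : {ffun 'I_n -> bool})
  : {ffun 'I_n -> bool} :=
  [ffun i => eval (fun v : var n k => if v is inl i' then sigma i' else false)
                  (g (FVar (inl i)))].

Definition associated_group n k (D : 'I_k -> {set 'I_n})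
  (G : (form (var n k) -> form (var n k)) -> Prop) : (interp D -> interp D) -> Prop :=
  fun f => bijective f /\
    forall (s : interp D) (sigma : {ffun 'I_n -> bool}),
      exists g, G g /\ ext (actX g sigma) (f s) =1 act g (ext sigma s).

Definition semantic_symmetry_group n k (D : 'I_k -> {set 'I_n}) (phi : form (var n k))
  (G : (interp D -> interp D) -> Prop) : Prop :=
  [/\ is_group G,
      (forall f, G f -> bijective f) &
      (forall f (s : interp D), G f -> qsat phi s = qsat phi (f s))].

From Pilot Require Import Defs.
From mathcomp Require Import all_boot.
From Stdlib Require Import FunctionalExtensionality.
Set Implicit Arguments. Unset Strict Implicit. Unset Printing Implicit Defensive.

(* Say that s' is related to s when for every assignment sigma some g in G_syn
   satisfies g(sigma)_s' = g(sigma_s); the associated group consists of the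
   bijections f with f(s) related to s.  The relation is reflexive and
   transitive because G_syn is a group, and since there are finitely many
   interpretations the inverse of such an f is one of its iterates, so the
   associated group is closed under inverses.
   The relation transports models backwards.  Given sigma and its g, the
   interpretation t with t_j(sigma'|D_j) = [g^-1(y_j)]_(g(sigma')_s') is well
   defined because g^-1 is admissible, and it satisfies
   g(sigma'_t) = g(sigma')_s' for all sigma'.  Hence t is a model of g(phi),
   i.e. of phi, whenever s' is a model of phi; and since g acts injectively on
   assignments, g(sigma_t) = g(sigma)_s' = g(sigma_s) forces sigma_t = sigma_s. *)

Section Formulas.
Variable V : eqType.
Implicit Types (r : V -> bool) (f : form V) (P Q : pred V).

Lemma eq_in_eval r1 r2 f :
  (forall v, has_var (pred1 v) f -> r1 v = r2 v) -> eval r1 f = eval r2 f.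
Proof.
elim: f => //= [v|a IHa|a IHa b IHb|a IHa b IHb|a IHa b IHb|a IHa b IHb] r12.
- by apply: r12; rewrite /= eqxx.
- by rewrite IHa.
all: by rewrite IHa ?IHb // => v v_f; apply: r12; rewrite v_f ?orbT.
Qed.

Lemma eq_eval r1 r2 f : r1 =1 r2 -> eval r1 f = eval r2 f.
Proof. by move=> r12; apply: eq_in_eval => v _; apply: r12. Qed.

Lemma over_has_var P f v : Defs.over P f -> has_var (pred1 v) f -> P v.
Proof.
elim: f => //= [w Pw /eqP <- //|a IHa b IHb|a IHa b IHb|a IHa b IHb|a IHa b IHb].
all: by case/andP=> Pa Pb /orP[/(IHa Pa)|/(IHb Pb)].
Qed.

Lemma eq_eval_over P r1 r2 f :
  Defs.over P f -> (forall v, P v -> r1 v = r2 v) -> eval r1 f = eval r2 f.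
Proof. by move=> P_f r12; apply: eq_in_eval => v /(over_has_var P_f)/r12. Qed.

Lemma sub_has_var P Q f : (forall v, P v -> Q v) -> has_var P f -> has_var Q f.
Proof.
move=> PQ; elim: f => //= a IHa b IHb.
all: by case/orP=> [/IHa ->|/IHb ->]; rewrite ?orbT.
Qed.

Lemma act_comp (g1 g2 : form V -> form V) r :
  preserves_sat g1 -> act (fun f => g1 (g2 f)) r =1 act g2 (act g1 r).
Proof. by move=> g1_sat v; rewrite /act g1_sat. Qed.

Lemma act_inj (g h : form V -> form V) r1 r2 :
  preserves_sat g -> cancel h g -> act g r1 =1 act g r2 -> r1 =1 r2.
Proof.
move=> g_sat hK r12 v.
have actK r : act h (act g r) v = r v by rewrite -act_comp // /act hK.
by rewrite -actK -[RHS]actK /act (eq_eval _ r12).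
Qed.

End Formulas.

Lemma iter_inverse (T : Type) (F : finType) (enc : T -> F) (f h : T -> T) :
  injective enc -> cancel f h -> cancel h f -> forall x, exists m, h x = iter m f x.
Proof.
move=> enc_inj fK hK x.
have iter_inj m : injective (iter m f).
  by elim: m => [|m IHm] y z //= /(can_inj fK)/IHm.
pose u (i : 'I_#|F|.+1) := enc (iter i f x).
have /injectivePn[i [j neq_ij /enc_inj eq_ij]] : ~~ injectiveb u.
  by apply/injectiveP => /leq_card; rewrite card_ord ltnn.
wlog lt_ij : i j neq_ij eq_ij / i < j.
  move=> wlog_ij; case: (ltngtP i j) => [|gt_ij|/val_inj eq_ij']; first exact: wlog_ij.
  - by apply: (wlog_ij j i) => //; rewrite eq_sym.
  - by rewrite eq_ij' eqxx in neq_ij.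
have period : iter (j - i) f x = x.
  by apply: (iter_inj i); rewrite -iterD subnKC ?(ltnW lt_ij).
exists (j - i).-1; rewrite -{1}period.
by move: lt_ij; rewrite -subn_gt0; case: (j - i) => //= m _; rewrite fK.
Qed.

Section Interpretations.
Variables (n k : nat) (D : 'I_k -> {set 'I_n}).

Lemma interp_finfun_inj :
  injective (fun s : interp D => finfun s : {dffun forall j, {ffun dom (D j) -> bool}}).
Proof.
move=> s1 s2 s12; apply: functional_extensionality_dep => j.
by have := congr1 (fun s : {dffun _} => s j) s12; rewrite !ffunE.
Qed.

Lemma eq_ext (sigma1 sigma2 : 'I_n -> bool) (s : interp D) :
  sigma1 =1 sigma2 -> ext sigma1 s =1 ext sigma2 s.
Proof.
move=> sigma12 [i|j] /=; first exact: sigma12.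
by congr (s j _); apply/ffunP => x; rewrite !ffunE.
Qed.

Lemma actX_id sigma : actX (fun f : form (var n k) => f) sigma =1 sigma.
Proof. by move=> i; rewrite ffunE. Qed.

Lemma actX_act (g : form (var n k) -> form (var n k)) sigma (s : interp D) i :
  Defs.over (@isX n k) (g (FVar (inl i))) -> actX g sigma i = act g (ext sigma s) (inl i).
Proof. by move=> gX; rewrite ffunE; apply: eq_eval_over gX _; case. Qed.

Lemma actX_comp (g1 g2 : form (var n k) -> form (var n k)) sigma :
  preserves_sat g1 -> (forall i, Defs.over (@isX n k) (g2 (FVar (inl i)))) ->
  actX (fun f => g1 (g2 f)) sigma =1 actX g2 (actX g1 sigma).
Proof.
move=> g1_sat g2X i; rewrite !ffunE g1_sat.
by apply: eq_eval_over (g2X i) _ => -[i'|] //= _; rewrite ffunE.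
Qed.

Definition extend_dom (Dj : {set 'I_n}) (d : dom Dj) : {ffun 'I_n -> bool} :=
  [ffun i => if insub i is Some x then d x else false].

Lemma extend_restrict (sigma : {ffun 'I_n -> bool}) (Dj : {set 'I_n}) i :
  i \in Dj -> extend_dom (restrict sigma Dj) i = sigma i.
Proof. by move=> Dj_i; rewrite ffunE insubT /= ffunE. Qed.

Section Transport.
Variables g h : form (var n k) -> form (var n k).
Hypotheses (g_sat : preserves_sat g) (h_sat : preserves_sat h) (gK : cancel g h).
Hypothesis gX : forall i, Defs.over (@isX n k) (g (FVar (inl i))).
Hypothesis gY : forall j, Defs.over (@isY n k) (g (FVar (inr j))).
Hypothesis hY : forall j, Defs.over (@isY n k) (h (FVar (inr j))).
Hypothesis hD : forall j i, depends D (h (FVar (inr j))) i ->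
  forall f, h f = FVar (inl i) -> Defs.over (inD D j) f.

Definition transport (s : interp D) : interp D := fun j =>
  [ffun d => eval (ext (actX g (extend_dom d)) s) (h (FVar (inr j)))].

Lemma transport_restrict s (sigma : {ffun 'I_n -> bool}) j :
  transport s j (restrict sigma (D j)) = eval (ext (actX g sigma) s) (h (FVar (inr j))).
Proof.
rewrite ffunE; apply: eq_in_eval => -[i|l] hj_l; first by have := over_has_var (hY j) hj_l.
congr (s l _); apply/ffunP => x; rewrite !ffunE.
have hj_x : depends D (h (FVar (inr j))) (val x).
  by apply: sub_has_var hj_l => _ /eqP ->; exact: valP x.
apply: eq_eval_over (hD hj_x (gK _)) _ => -[i Dj_i|] //=.
exact: extend_restrict.
Qed.

Lemma act_ext_transport s (sigma : {ffun 'I_n -> bool}) :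
  act g (ext sigma (transport s)) =1 ext (actX g sigma) s.
Proof.
case=> [i|j] /=; first by rewrite (actX_act sigma (transport s) (gX i)).
rewrite /act -[RHS]/(eval (ext (actX g sigma) s) (FVar (inr j))) -[X in _ = eval _ X]gK h_sat.
apply: eq_eval_over (gY j) _ => -[//|l] _ /=.
exact: transport_restrict.
Qed.

Lemma qsat_transport phi s : qsat phi s -> qsat (g phi) (transport s).
Proof.
move=> /forallP sat_s; apply/forallP => sigma.
by rewrite g_sat (eq_eval _ (act_ext_transport s sigma)).
Qed.

End Transport.

Definition syn_related (G : (form (var n k) -> form (var n k)) -> Prop)
  (s s' : interp D) : Prop :=
  forall sigma : {ffun 'I_n -> bool},
    exists g, G g /\ ext (actX g sigma) s' =1 act g (ext sigma s).

Section SynRelated.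
Variable G : (form (var n k) -> form (var n k)) -> Prop.
Hypothesis G_adm : admissible_group D G.

Lemma syn_related_refl s : syn_related G s s.
Proof.
have [[G_id _ _] _] := G_adm; move=> sigma; exists (fun f => f); split=> // v.
exact: eq_ext (actX_id sigma) v.
Qed.

Lemma syn_related_trans s1 s2 s3 :
  syn_related G s1 s2 -> syn_related G s2 s3 -> syn_related G s1 s3.
Proof.
have [[_ G_comp _] G_admissible] := G_adm.
move=> rel12 rel23 sigma.
have [g1 [G_g1 g1_12]] := rel12 sigma.
have [g2 [G_g2 g2_23]] := rel23 (actX g1 sigma).
have [_ g1_sat _ _ _] := G_admissible _ G_g1.
have [_ _ g2X _ _] := G_admissible _ G_g2.
exists (fun f => g1 (g2 f)); split; first exact: G_comp.
move=> v; rewrite (eq_ext _ (actX_comp _ g1_sat g2X)) g2_23 (@act_comp _ g1 g2 _ g1_sat).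
by rewrite /act (eq_eval _ g1_12).
Qed.

Lemma syn_related_iter f :
  (forall s, syn_related G s (f s)) -> forall m s, syn_related G s (iter m f s).
Proof.
move=> f_rel; elim=> [|m IHm] s /=; first exact: syn_related_refl.
exact: syn_related_trans (IHm s) (f_rel _).
Qed.

Lemma syn_related_inv f h : cancel f h -> cancel h f ->
  (forall s, syn_related G s (f s)) -> forall s, syn_related G s (h s).
Proof.
move=> fK hK f_rel s.
have [m ->] := iter_inverse interp_finfun_inj fK hK s.
exact: syn_related_iter.
Qed.

Lemma qsat_syn_related phi s s' :
  (forall g (t : interp D), G g -> qsat phi t = qsat (g phi) t) ->
  syn_related G s s' -> qsat phi s' -> qsat phi s.
Proof.
have [[_ _ G_inv] G_admissible] := G_adm.
move=> G_sym rel sat_s'; apply/forallP => sigma.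
have [g [G_g g_rel]] := rel sigma.
have [h [G_h gK hK]] := G_inv g G_g.
have [_ g_sat gX gY _] := G_admissible g G_g.
have [_ h_sat _ hY hD] := G_admissible h G_h.
pose t := transport g h s'.
have sat_t : qsat phi t by rewrite (G_sym g t G_g); exact: qsat_transport.
have ext_t : ext sigma t =1 ext sigma s.
  apply: (act_inj g_sat hK) => v.
  by rewrite act_ext_transport // g_rel.
by rewrite -(eq_eval _ ext_t); exact: (forallP sat_t).
Qed.

End SynRelated.

End Interpretations.

Theorem lemma5 (n k : nat) (D : 'I_k -> {set 'I_n}) (phi : form (var n k))
  (Gsyn : (form (var n k) -> form (var n k)) -> Prop) :
  @syntactic_symmetry_group n k D phi Gsyn ->
  @semantic_symmetry_group n k D phi (@associated_group n k D Gsyn).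
Proof.
case=> G_adm G_sym; split.
- split.
  + by split; [exists id | exact: syn_related_refl].
  + move=> f1 f2 [f1_bij f1_rel] [f2_bij f2_rel]; split; first exact: bij_comp.
    by move=> s; apply: syn_related_trans (f2_rel s) (f1_rel (f2 s)).
  + move=> f [[h fK hK] f_rel]; exists h; split=> //; split; first exact: Bijective hK fK.
    exact: syn_related_inv fK hK f_rel.
- by move=> f [].
- move=> f s [[h fK hK] f_rel]; apply/idP/idP => sat.
  + rewrite -(fK s) in sat.
    exact (qsat_syn_related G_adm G_sym (syn_related_inv G_adm fK hK f_rel (f s)) sat).
  + exact (qsat_syn_related G_adm G_sym (f_rel s) sat).
Qed.
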